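(* Let $k\ge9$ and let $\boldsymbol\xi\in[P_{k-1}(\boldsymbol K)]^3$ be such that all the vertex functionals, the edge moments $(\boldsymbol\xi\cdot\boldsymbol t,1)_{\boldsymbol e}$, and the edge functionals (1.a)–(1.f) of the space $\mathbf N^{\operatorname{curl}}_{k-1}$ (listed in the context) vanish on $\boldsymbol\xi$. Then $\boldsymbol\xi$, $\nabla\boldsymbol\xi$ and $\nabla(\operatorname{curl}\boldsymbol\xi)$ vanish on every edge of $\boldsymbol K$.
   Context: $\boldsymbol K$ is a tetrahedron, $P_m$ denotes polynomials of degree $\le m$. For an edge $\boldsymbol e$ with endpoints having barycentric coordinates $\lambda_0,\lambda_1$ (restricted to $\boldsymbol e$), let $\boldsymbol t$ be its unit tangent and $\boldsymbol n_1,\boldsymbol n_2$ orthonormal unit normals with $\boldsymbol n_1\perp\boldsymbol n_2$. For a space $W$ of functions on $\boldsymbol e$, $W/\mathbb R$ denotes its subspace of zero-mean functions. $\langle\!\langle u,v\rangle\!\rangle_{0,\boldsymbol e}=(\partial u/\partial\boldsymbol t,\partial v/\partial\boldsymbol t)_{\boldsymbol e}$. Functionals of $\mathbf N^{\operatorname{curl}}_{k-1}$ on $\boldsymbol\xi\in[P_{k-1}(\boldsymbol K)]^3$: vertex functionals: all partial derivatives $D^\alpha\boldsymbol\xi(\boldsymbol x)$, $0\le|\alpha|\le3$, at each vertex $\boldsymbol x$; edge moments $(\boldsymbol\xi\cdot\boldsymbol t,1)_{\boldsymbol e}$ for each edge; on each edge $\boldsymbol e$: (1.a) $(\boldsymbol\xi\cdot\boldsymbol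 t,b)_{\boldsymbol e}$, $b\in(\lambda_0\lambda_1)^4P_{k-9}(\boldsymbol e)/\mathbb R$; (1.b) $\langle\!\langle\boldsymbol\xi\cdot\boldsymbol n_j,b\rangle\!\rangle_{0,\boldsymbol e}$, $b\in(\lambda_0\lambda_1)^4P_{k-9}(\boldsymbol e)$, $j=1,2$; (1.c) $(\partial(\boldsymbol\xi\cdot\boldsymbol t)/\partial\boldsymbol n_j,b)_{\boldsymbol e}$, $b\in(\lambda_0\lambda_1)^3P_{k-8}(\boldsymbol e)$, $j=1,2$; (1.d) $(\partial(\boldsymbol\xi\cdot\boldsymbol n_{j'})/\partial\boldsymbol n_j,b)_{\boldsymbol e}$, $b\in(\lambda_0\lambda_1)^3P_{k-8}(\boldsymbol e)$, $j,j'=1,2$; (1.e) $(\partial(\operatorname{curl}\boldsymbol\xi)/\partial\boldsymbol n_1,\boldsymbol b)_{\boldsymbol e}$, $\boldsymbol b\in[(\lambda_0\lambda_1)^2P_{k-7}(\boldsymbol e)]^3$; (1.f) $((I-\boldsymbol n_2\otimes\boldsymbol n_2)\,\partial(\operatorname{curl}\boldsymbol\xi)/\partial\boldsymbol n_2,\boldsymbol b)_{\boldsymbol e}$, $\boldsymbol b\in[(\lambda_0\lambda_1)^2P_{k-7}(\boldsymbol e)]^3$. *)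

From HB Require Import structures.
From mathcomp Require Import all_boot all_order all_algebra.
From mathcomp Require Import mpoly.
Set Implicit Arguments. Unset Strict Implicit. Unset Printing Implicit Defensive.
Import Order.TTheory GRing.Theory Num.Theory.
Local Open Scope ring_scope.

Section FEM.
Variable R : rcfType.

Definition vec := 'I_3 -> R.
Definition vfield := 'I_3 -> {mpoly R[3]}.

Definition dot (u w : vec) : R := \sum_(i < 3) u i * w i.
Definition vnorm (u : vec) : R := Num.sqrt (dot u u).

Definition dderiv (d : vec) (p : {mpoly R[3]}) : {mpoly R[3]} :=
  \sum_(i < 3) d i *: p^`M(i).

Definition dotp (d : vec) (xi : vfield) : {mpoly R[3]} :=
  \sum_(i < 3) d i *: xi i.

Definition i0 : 'I_3 := @Ordinal 3 0 isT.
Definition i1 : 'I_3 := @Ordinal 3 1 isT.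
Definition i2 : 'I_3 := @Ordinal 3 2 isT.

Definition curl (xi : vfield) : vfield := fun i =>
  match nat_of_ord i with
  | 0 => (xi i2)^`M(i1) - (xi i1)^`M(i2)
  | 1 => (xi i0)^`M(i2) - (xi i2)^`M(i0)
  | _ => (xi i1)^`M(i0) - (xi i0)^`M(i1)
  end.

(* restriction of p to the edge [a,b], parametrized by s in [0,1],
   x(s) = a + s (b - a); then lambda_0 = 1 - s and lambda_1 = s on the edge *)
Definition restrict (a b : vec) (p : {mpoly R[3]}) : {poly R} :=
  mmap (@polyC R) (fun i => (a i)%:P + (b i - a i) *: 'X) p.

Definition int01 (q : {poly R}) : R := \sum_(i < size q) q`_i / (i.+1)%:R.

Definition elen (a b : vec) : R := vnorm (fun i => b i - a i).
Definition tang (a b : vec) : vec := fun i => (b i - a i) / elen a b.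

(* L2 inner product on the edge: (f,g)_e = |e| * int_0^1 f(s) g(s) ds *)
Definition eip (a b : vec) (f g : {poly R}) : R := elen a b * int01 (f * g).

(* <<f,g>>_{0,e} = (df/dt, dg/dt)_e, with d/dt = (1/|e|) d/ds on the edge *)
Definition etip (a b : vec) (f g : {poly R}) : R :=
  eip a b ((elen a b)^-1 *: f^`()) ((elen a b)^-1 *: g^`()).

(* (lambda_0 lambda_1)^r q  with lambda_0 = 1 - s, lambda_1 = s *)
Definition bubble (r : nat) (q : {poly R}) : {poly R} :=
  (('X : {poly R}) * (1 - 'X)) ^+ r * q.

(* q in P_m(e) iff size q <= m.+1 *)

Definition nondeg_tet (v : 'I_4 -> vec) : Prop :=
  \det (\matrix_(r < 3, c < 3) (v (lift ord0 r) c - v ord0 c)) != 0.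

End FEM.

From mathcomp Require Import all_boot all_order all_algebra.
From mathcomp Require Import mpoly.
From mathcomp Require Import polyrcf.
From mathcomp Require Import zify ring.
Import Order.TTheory GRing.Theory Num.Theory.
Set Implicit Arguments. Unset Strict Implicit. Unset Printing Implicit Defensive.
Local Open Scope ring_scope.

(* Fix an edge e = [a,b] of the tetrahedron with frame (t, n_1, n_2) and write
   rho for the restriction to e, parametrized by s in [0,1].  The vertex
   functionals make xi flat of order 4 at a and b, so rho of any derivative of
   order j of xi is a bubble (s(1-s))^(4-j) q.  The key fact is that such a
   polynomial, orthogonal to every bubble of the same order whose cofactor has
   the right degree, is zero: it can be tested against itself.  Hence
   - (1.a) with the edge moment kills rho(xi.t) and (1.b) kills rho(xi.n_j),
     so rho(xi) = 0 and all tangential derivatives vanish on e;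
   - (1.c), (1.d) kill the normal derivatives, hence rho(grad xi) = 0, so
     rho(curl xi) = 0 together with its tangential derivative;
   - (1.e) kills d(curl xi)/dn_1; div curl xi = 0 then kills the
     n_2-component of d(curl xi)/dn_2, and (1.f) kills its other components. *)

Section Univariate.
Variable R : rcfType.
Implicit Types (f g q : {poly R}).

Definition prim q : {poly R} :=
  \poly_(i < (size q).+1) (if i is j.+1 then q`_j / (j.+1)%:R else 0).

Lemma prim_deriv q : (prim q)^`() = q.
Proof.
apply/polyP=> i; rewrite coef_deriv coef_poly ltnS.
case: ltnP => hi.
  by apply/eqP; rewrite -(mulr_natr (q`_i / _)) divfK // pnatr_eq0.
by apply/eqP; rewrite mul0rn nth_default.
Qed.

Lemma int01_prim q : int01 q = (prim q).[1] - (prim q).[0].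
Proof.
rewrite horner_coef0 coef_poly /= subr0.
rewrite (horner_coef_wide 1 (size_poly _ _)) big_ord_recl /= coef_poly /=.
rewrite mul0r add0r; apply: eq_bigr => i _.
by rewrite coef_poly /bump /= add1n ltnS ltn_ord expr1n mulr1.
Qed.

Lemma prim_sq_homo g :
  {in `[0, 1] &, {homo horner (prim (g * g)) : x y / x <= y}}.
Proof.
by apply: ler_hornerW => x _; rewrite prim_deriv hornerM -expr2 sqr_ge0.
Qed.

Lemma int01_sq_ge0 g : 0 <= int01 (g * g).
Proof.
by rewrite int01_prim subr_ge0 prim_sq_homo ?in_itv /= ?ler01 ?lexx.
Qed.

(* A polynomial vanishing on [0,1] (indeed at the points 1/(i+1)) is zero. *)
Lemma poly_eq0_on01 f : (forall x : R, 0 <= x <= 1 -> f.[x] = 0) -> f = 0.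
Proof.
move=> f0; apply/eqP; apply/negPn/negP => nz.
pose rs := mkseq (fun i => ((i.+1)%:R : R)^-1) (size f).
suff: (size rs < size f)%N by rewrite size_mkseq ltnn.
apply: max_poly_roots nz _ _.
  apply/allP => x /mapP [i _ ->]; apply/rootP/f0.
  by rewrite invr_ge0 ler0n /= invf_le1 ?ltr0Sn // ler1n.
rewrite map_inj_uniq ?iota_uniq // => i j /invr_inj /eqP.
by rewrite eqr_nat eqSS => /eqP.
Qed.

(* Definiteness of the L2 norm on [0,1]: the primitive of g*g is constant. *)
Lemma int01_sq_eq0 g : int01 (g * g) = 0 -> g = 0.
Proof.
move=> int0; set F := prim (g * g).
have F10 : F.[1] = F.[0] by apply/eqP; rewrite -subr_eq0 -int01_prim int0.
have Fconst : F - (F.[0])%:P = 0.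
  apply: poly_eq0_on01 => x /andP [x0 x1].
  rewrite hornerD hornerN hornerC; apply/eqP; rewrite subr_eq0 eq_le.
  have h0 : (0 : R) \in `[0, 1] by rewrite in_itv /= lexx ler01.
  have h1 : (1 : R) \in `[0, 1] by rewrite in_itv /= lexx ler01.
  have hx : x \in `[0, 1] by rewrite in_itv /= x0 x1.
  by rewrite (prim_sq_homo g h0 hx x0) -F10 (prim_sq_homo g hx h1 x1).
have : F^`() = 0 by rewrite (subr0_eq Fconst) derivC.
by rewrite prim_deriv => /eqP; rewrite mulf_eq0 orbb => /eqP.
Qed.

Lemma derivn_mulXsubC g c n :
  (g * ('X - c%:P))^`(n.+1) = g^`(n) *+ n.+1 + g^`(n.+1) * ('X - c%:P).
Proof.
elim: n => [|n IH].
  by rewrite derivn1 derivn0 derivM derivXsubC mulr1 mulr1n addrC.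
rewrite derivnS IH derivD derivMn derivM derivXsubC mulr1 -!derivnS.
by rewrite [in RHS]mulrSr -addrA [g^`(n.+1) + _]addrC.
Qed.

Lemma dvdp_XsubC_exp_derivn r c f :
  (forall m, (m < r)%N -> (f^`(m)).[c] = 0) -> ('X - c%:P)^+r %| f.
Proof.
elim: r f => [|r IH] f fc0; first by rewrite expr0 dvd1p.
have /factor_theorem [g fg] : root f c by apply/rootP; rewrite -(derivn0 f) fc0.
rewrite fg in fc0 *.
rewrite exprSr dvdp_mul2r ?polyXsubC_eq0 //; apply: IH => m hm.
have := fc0 m.+1 hm.
rewrite derivn_mulXsubC hornerD hornerM hornerXsubC subrr mulr0 addr0 hornerMn.
by move/eqP; rewrite mulrn_eq0 /= => /eqP.
Qed.

Definition endpoint_poly r : {poly R} := ('X - 0%:P)^+r * ('X - 1%:P)^+r.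

Definition bubble_quot r f : {poly R} := (-1)^+r *: (f %/ endpoint_poly r).

Lemma endpoint_poly_neq0 r : endpoint_poly r != 0.
Proof. by rewrite mulf_neq0 // expf_neq0 // polyXsubC_eq0. Qed.

Lemma bubble_endpoint_poly r q : bubble r q = (-1)^+r *: (endpoint_poly r * q).
Proof.
rewrite /bubble /endpoint_poly polyC0 polyC1 subr0 -exprMn -opprB mulrN.
by rewrite -mul_polyC rmorphXn /= rmorphN1 mulrA -exprMn mulN1r.
Qed.

Lemma bubble_factor r f :
  (forall m, (m < r)%N -> (f^`(m)).[0] = 0 /\ (f^`(m)).[1] = 0) ->
  f = bubble r (bubble_quot r f) /\ (size (bubble_quot r f) <= size f - r.*2)%N.
Proof.
move=> f01.
have dvd : endpoint_poly r %| f.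
  rewrite /endpoint_poly Gauss_dvdp; last first.
    by apply/coprimep_expl/coprimep_expr/coprimep_XsubC2; rewrite subr0 oner_neq0.
  by rewrite !dvdp_XsubC_exp_derivn // => m hm; case: (f01 m hm).
split.
  rewrite bubble_endpoint_poly /bubble_quot -scalerAr scalerA -exprMn.
  by rewrite mulrNN mulr1 expr1n scale1r mulrC divpK.
rewrite size_scale ?signr_eq0 // size_divp ?endpoint_poly_neq0 //.
rewrite /endpoint_poly size_mul ?expf_neq0 ?polyXsubC_eq0 // !size_exp_XsubC.
by rewrite addSn /= addnS -addnn.
Qed.

(* A bubble of positive order with zero derivative is zero: it vanishes at 0. *)
Lemma bubble_deriv_eq0 f r q : (0 < r)%N -> f = bubble r q -> f^`() = 0 -> f = 0.
Proof.
move=> r_gt0 fq df0.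
have sf : (size f <= 1)%N.
  by move: (polyorder.size_deriv f); rewrite df0 size_poly0; case: (size f) => [|[|?]].
have f00 : f.[0] = 0.
  by rewrite fq /bubble hornerM horner_exp hornerM hornerX mul0r expr0n gtn_eqF // mul0r.
by rewrite (size1_polyC sf) -horner_coef0 f00.
Qed.

End Univariate.

Section Restriction.
Variable R : rcfType.
Implicit Types (p q : {mpoly R[3]}) (a b d : vec R).

Lemma restrictD a b p q : restrict a b (p + q) = restrict a b p + restrict a b q.
Proof. exact: raddfD. Qed.

Lemma restrictB a b p q : restrict a b (p - q) = restrict a b p - restrict a b q.
Proof. exact: raddfB. Qed.

Lemma restrict0 a b : restrict a b 0 = 0.
Proof. exact: raddf0. Qed.

Lemma restrict_sum a b (I : Type) (r : seq I) (P : pred I) (F : I -> {mpoly R[3]}) :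
  restrict a b (\sum_(i <- r | P i) F i) = \sum_(i <- r | P i) restrict a b (F i).
Proof. exact: raddf_sum. Qed.

Lemma restrictZ a b c p : restrict a b (c *: p) = c *: restrict a b p.
Proof. by rewrite /restrict mmapZ mul_polyC. Qed.

Lemma restrictM a b p q : restrict a b (p * q) = restrict a b p * restrict a b q.
Proof. exact: rmorphM. Qed.

Lemma restrictC a b c : restrict a b c%:MP = c%:P.
Proof. by rewrite /restrict mmapC. Qed.

Lemma restrictX a b i : restrict a b 'X_i = (a i)%:P + (b i - a i) *: 'X.
Proof. by rewrite /restrict mmapX mmap1U. Qed.

Lemma horner_restrict a b p s :
  (restrict a b p).[s] = p.@[fun i => a i + s * (b i - a i)].
Proof.
elim/mpolyind: p => [|c m p _ _ IH]; first by rewrite restrict0 horner0 meval0.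
rewrite restrictD hornerD IH mevalD restrictZ hornerZ mevalZ; congr (_ * _ + _).
rewrite /restrict mmapX /mmap1 mevalX horner_prod; apply: eq_bigr => i _.
by rewrite horner_exp hornerD hornerC hornerZ hornerX mulrC.
Qed.

Lemma restrict_comb_eq0 a b (w : vec R) (G : 'I_3 -> {mpoly R[3]}) :
  (forall c, restrict a b (G c) = 0) -> restrict a b (\sum_(i < 3) w i *: G i) = 0.
Proof. by move=> G0; rewrite restrict_sum big1 // => i _; rewrite restrictZ G0 scaler0. Qed.

Lemma dderivD d p q : dderiv d (p + q) = dderiv d p + dderiv d q.
Proof. by rewrite /dderiv -big_split; apply: eq_bigr => i _; rewrite mderivD scalerDr. Qed.

Lemma dderivZ d c p : dderiv d (c *: p) = c *: dderiv d p.
Proof.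
rewrite /dderiv scaler_sumr; apply: eq_bigr => i _.
by rewrite mderivZ !scalerA mulrC.
Qed.

Lemma dderiv0 d : dderiv d 0 = 0.
Proof. by rewrite /dderiv big1 // => i _; rewrite mderiv0 scaler0. Qed.

Lemma dderiv_sum d (I : Type) (r : seq I) (P : pred I) (F : I -> {mpoly R[3]}) :
  dderiv d (\sum_(i <- r | P i) F i) = \sum_(i <- r | P i) dderiv d (F i).
Proof.
elim/big_rec2: _ => [|i x y _ <-]; first by rewrite dderiv0.
by rewrite dderivD.
Qed.

Lemma dderivC d c : dderiv d c%:MP = 0.
Proof. by rewrite /dderiv big1 // => i _; rewrite mderivC scaler0. Qed.

Lemma dderivM d p q : dderiv d (p * q) = dderiv d p * q + p * dderiv d q.
Proof.
rewrite /dderiv mulr_suml mulr_sumr -big_split; apply: eq_bigr => i _.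
by rewrite mderivM scalerDr scalerAl scalerAr.
Qed.

Lemma dderivX d i : dderiv d 'X_i = d i *: 1.
Proof.
rewrite /dderiv (bigD1 i) //= big1 ?addr0.
  rewrite mderivX mnm1E eqxx /= scale1r (_ : (U_(i) - U_(i) = 0)%MM) ?mpolyX0 //.
  by apply/mnmP => j; rewrite mnmBE subnn mnm0E.
by move=> j hj; rewrite mderivX mnm1E eq_sym (negbTE hj) scale0r scaler0.
Qed.

(* Chain rule: differentiating along the edge is the directional derivative
   along b - a. Both sides are derivations, so it suffices to check generators. *)
Lemma deriv_restrict a b p :
  (restrict a b p)^`() = restrict a b (dderiv (fun i => b i - a i) p).
Proof.
set d := fun i => b i - a i.
pose P q := (restrict a b q)^`() = restrict a b (dderiv d q).
have PD q1 q2 : P q1 -> P q2 -> P (q1 + q2).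
  by rewrite /P => h1 h2; rewrite restrictD derivD h1 h2 dderivD restrictD.
have PM q1 q2 : P q1 -> P q2 -> P (q1 * q2).
  rewrite /P => h1 h2; rewrite restrictM derivM h1 h2 dderivM.
  by rewrite restrictD !restrictM.
have PC c : P c%:MP by rewrite /P restrictC derivC dderivC restrict0.
have PX i : P 'X_i.
  rewrite /P restrictX derivD derivC derivZ derivX add0r dderivX restrictZ.
  by rewrite -mpolyC1 restrictC.
have Pm m : P 'X_[m].
  rewrite mpolyXE_id; apply: (big_ind P); [by rewrite -mpolyC1 | exact: PM |].
  by move=> i _; elim: (m i) => [|e IH]; [rewrite expr0 -mpolyC1 | rewrite exprS; exact: PM].
elim/mpolyind: p => [|c m p _ _ IH]; first by rewrite /P restrict0 deriv0 dderiv0 restrict0.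
by apply: PD => //; rewrite -mul_mpolyC; apply: PM.
Qed.

Lemma derivn_restrict a b p n :
  (restrict a b p)^`(n) = restrict a b (iter n (dderiv (fun i => b i - a i)) p).
Proof. by elim: n => [|n IH]; rewrite ?derivn0 // derivnS IH deriv_restrict. Qed.

Lemma restrict_dderiv_tang_eq0 a b p : elen a b != 0 -> restrict a b p = 0 ->
  restrict a b (dderiv (tang a b) p) = 0.
Proof.
move=> hL p0.
have scale : dderiv (fun i => b i - a i) p = elen a b *: dderiv (tang a b) p.
  rewrite /dderiv scaler_sumr; apply: eq_bigr => i _.
  by rewrite scalerA /tang mulrC divfK.
have := deriv_restrict a b p; rewrite p0 deriv0 scale restrictZ => /esym/eqP.
by rewrite scaler_eq0 (negbTE hL) /= => /eqP.
Qed.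

End Restriction.

(* Degree bounds: [msize p] is one more than the total degree of p. *)
Section Degree.
Variable R : rcfType.
Implicit Types (p : {mpoly R[3]}) (a b d : vec R).

Lemma size_prod_le (I : Type) (r : seq I) (F : I -> {poly R}) (e : I -> nat) :
  (forall i, (size (F i) <= (e i).+1)%N) ->
  (size (\prod_(i <- r) F i)%R <= (\sum_(i <- r) e i).+1)%N.
Proof.
move=> sF; elim: r => [|i r IH]; first by rewrite !big_nil size_poly1.
rewrite !big_cons (leq_trans (size_polyMleq _ _)) //.
by move: (sF i) IH; set x := size _; set y := size _; lia.
Qed.

Lemma size_restrict a b p : (size (restrict a b p) <= msize p)%N.
Proof.
rewrite /restrict (mmapE (msize p)) // (leq_trans (size_sum _ _ _)) //.
apply/bigmax_leqP => /= m _; rewrite (leq_trans (size_polyMleq _ _)) //.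
have sm : (size (mmap1 (fun i => (a i)%:P + (b i - a i) *: 'X)%R m) <= (mdeg m).+1)%N.
  rewrite /mmap1 mdegE; apply: size_prod_le => i.
  apply: leq_trans (size_poly_exp_leq _ _) _; rewrite ltnS -[leqRHS]mul1n leq_mul2r.
  rewrite -subn1 leq_subLR orbC (leq_trans (size_polyD _ _)) //= geq_max.
  rewrite size_polyC (leq_trans (leq_b1 _)) //=.
  by rewrite (leq_trans (size_scale_leq _ _)) // size_polyX.
have := bmdeg m; rewrite size_polyC.
by move: sm; set x := size _; set y := mdeg m; set z := mmeasure _ _; case: (_ != 0) => /=; lia.
Qed.

Lemma msize_leP p K : (forall m, m \in msupp p -> (mdeg m < K)%N) -> (msize p <= K)%N.
Proof.
move=> H; rewrite msizeE big_seq; apply: (big_ind (fun x => x <= K)%N) => //.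
by move=> x y hx hy; rewrite geq_max hx hy.
Qed.

Lemma msize_mderiv p i : (msize (p^`M(i)) <= (msize p).-1)%N.
Proof.
apply: msize_leP => m; rewrite mcoeff_msupp mcoeff_deriv => hm.
have : (m + U_(i))%MM \in msupp p.
  by rewrite mcoeff_msupp; apply: contraNneq hm => ->; rewrite mul0rn.
by move/msize_mdeg_lt; rewrite mdegD mdeg1; lia.
Qed.

Lemma msize_dderiv K d p : (msize p <= K)%N -> (msize (dderiv d p) <= K.-1)%N.
Proof.
move=> sp; rewrite /dderiv (leq_trans (msize_sum _ _ _)) //.
apply/bigmax_leqP => i _; apply: leq_trans (msizeZ_le _ _) _.
by apply: leq_trans (msize_mderiv _ _) _; rewrite -!subn1 leq_sub2r.
Qed.

Lemma msize_dotp K (w : vec R) (F : vfield R) :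
  (forall c, msize (F c) <= K)%N -> (msize (dotp w F) <= K)%N.
Proof.
move=> sF; rewrite /dotp (leq_trans (msize_sum _ _ _)) //.
by apply/bigmax_leqP => i _; exact: leq_trans (msizeZ_le _ _) (sF i).
Qed.

Lemma msize_curl K (F : vfield R) :
  (forall c, msize (F c) <= K)%N -> forall c, (msize (curl F c) <= K.-1)%N.
Proof.
move=> sF c.
have sd i j : (msize ((F i)^`M(j)) <= K.-1)%N.
  by apply: leq_trans (msize_mderiv _ _) _; rewrite -!subn1 leq_sub2r.
rewrite /curl; case: (nat_of_ord c) => [|[|?]];
  by rewrite (leq_trans (msizeD_le _ _)) // geq_max sd msizeN sd.
Qed.

End Degree.

Section Flatness.
Variable R : rcfType.
Implicit Types (p q : {mpoly R[3]}) (a b d x : vec R).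

Definition flat x r p := forall m, (mdeg m < r)%N -> (p^`M[m]).@[x] = 0.

Lemma flatD x r p q : flat x r p -> flat x r q -> flat x r (p + q).
Proof. by move=> hp hq m hm; rewrite mderivmD mevalD hp ?hq ?addr0. Qed.

Lemma flatZ x r c p : flat x r p -> flat x r (c *: p).
Proof. by move=> hp m hm; rewrite mderivmZ mevalZ hp ?mulr0. Qed.

Lemma flatB x r p q : flat x r p -> flat x r q -> flat x r (p - q).
Proof. by move=> hp hq; apply: flatD => //; rewrite -scaleN1r; apply: flatZ. Qed.

Lemma flat_sum x r (I : Type) (s : seq I) (P : pred I) (F : I -> {mpoly R[3]}) :
  (forall i, P i -> flat x r (F i)) -> flat x r (\sum_(i <- s | P i) F i).
Proof.
move=> H; apply: (big_ind (flat x r)) => //; last exact: flatD.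
by move=> m _; rewrite raddf0 meval0.
Qed.

Lemma flat_mderiv x r p i : flat x r.+1 p -> flat x r (p^`M(i)).
Proof.
move=> hp m hm; rewrite -mderivmU1m -mderivmDm; apply: hp.
by rewrite mdegD mdeg1.
Qed.

Lemma flat_dderiv x r d p : flat x r.+1 p -> flat x r (dderiv d p).
Proof. by move=> hp; apply: flat_sum => i _; apply/flatZ/flat_mderiv. Qed.

Lemma flat_dotp x r (w : vec R) (F : vfield R) :
  (forall c, flat x r (F c)) -> flat x r (dotp w F).
Proof. by move=> H; apply: flat_sum => i _; apply: flatZ. Qed.

Lemma flat_curl x r (F : vfield R) :
  (forall c, flat x r.+1 (F c)) -> forall c, flat x r (curl F c).
Proof.
by move=> H c; rewrite /curl; case: (nat_of_ord c) => [|[|?]]; apply: flatB; apply: flat_mderiv.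
Qed.

Lemma flat_iter_dderiv x r d p n :
  flat x r p -> (n < r)%N -> (iter n (dderiv d) p).@[x] = 0.
Proof.
elim: n r p => [|n IH] [|r] p hp hn //.
  by rewrite -(mderivm0m p) hp // mdeg0.
by rewrite iterSr; apply: (IH r) => //; apply: flat_dderiv.
Qed.

Lemma restrict_bubble a b r p : flat a r p -> flat b r p ->
  restrict a b p = bubble r (bubble_quot r (restrict a b p)) /\
  (size (bubble_quot r (restrict a b p)) <= msize p - r.*2)%N.
Proof.
move=> ha hb.
have ends m : (m < r)%N ->
    ((restrict a b p)^`(m)).[0] = 0 /\ ((restrict a b p)^`(m)).[1] = 0.
  move=> hm; rewrite derivn_restrict !horner_restrict; split.
    rewrite (@meval_eq _ _ _ a); first exact: flat_iter_dderiv ha hm.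
    by move=> i /=; rewrite mul0r addr0.
  rewrite (@meval_eq _ _ _ b); first exact: flat_iter_dderiv hb hm.
  by move=> i /=; rewrite mul1r addrC subrK.
have [fq sq] := bubble_factor ends.
by split=> //; apply: leq_trans sq _; apply/leq_sub2r/size_restrict.
Qed.

End Flatness.

Section Geometry.
Variable R : rcfType.
Implicit Types (a b u w : vec R).

Lemma dot_sym u w : dot u w = dot w u.
Proof. by apply: eq_bigr => i _; rewrite mulrC. Qed.

Lemma dot_self_ge0 u : 0 <= dot u u.
Proof. by rewrite sumr_ge0 // => i _; rewrite -expr2 sqr_ge0. Qed.

Lemma dot_self_eq0 u : dot u u = 0 -> forall i, u i = 0.
Proof.
move=> u0 i.
have sq_ge0 (j : 'I_3) : predT j -> 0 <= u j * u j by rewrite -expr2 sqr_ge0.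
have /eqP := @psumr_eq0P _ _ _ _ sq_ge0 u0 i isT.
by rewrite mulf_eq0 orbb => /eqP.
Qed.

Lemma elen_neq0 a b : (exists i, a i != b i) -> elen a b != 0.
Proof.
case=> i ab; rewrite /elen /vnorm sqrtr_eq0 -ltNge lt_def dot_self_ge0 andbT.
apply: contra ab => /eqP/dot_self_eq0/(_ i)/eqP.
by rewrite subr_eq0 eq_sym.
Qed.

Lemma tang_unit a b : elen a b != 0 -> dot (tang a b) (tang a b) = 1.
Proof.
move=> hL.
have -> : dot (tang a b) (tang a b)
    = dot (fun i => b i - a i) (fun i => b i - a i) / (elen a b)^+2.
  rewrite /dot mulr_suml; apply: eq_bigr => i _.
  by rewrite /tang expr2 invfM !mulrA; congr (_ * _); rewrite mulrAC.
rewrite /elen /vnorm sqr_sqrtr ?dot_self_ge0 // divff //.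
by move: hL; rewrite /elen /vnorm sqrtr_eq0 -ltNge => /lt0r_neq0.
Qed.

Lemma eip_sq_ge0 a b f : 0 <= eip a b f f.
Proof. by rewrite /eip mulr_ge0 ?int01_sq_ge0 // /elen /vnorm sqrtr_ge0. Qed.

Lemma eip_sq_eq0 a b f : elen a b != 0 -> eip a b f f = 0 -> f = 0.
Proof.
move=> hL /eqP; rewrite /eip mulf_eq0 (negbTE hL) /= => /eqP.
exact: int01_sq_eq0.
Qed.

Lemma sum_eip_sq_eq0 a b (I : finType) (f : I -> {poly R}) : elen a b != 0 ->
  \sum_(c : I) eip a b (f c) (f c) = 0 -> forall c, f c = 0.
Proof.
move=> hL f0 c; apply: (eip_sq_eq0 hL).
have ge0 (j : I) : predT j -> 0 <= eip a b (f j) (f j) by rewrite eip_sq_ge0.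
exact: @psumr_eq0P _ _ _ _ ge0 f0 c isT.
Qed.

Definition orthonormal_frame (E : 'I_3 -> vec R) : Prop :=
  forall p q, dot (E p) (E q) = (p == q)%:R.

(* The matrix of an orthonormal frame is orthogonal, hence so is its
   transpose. *)
Lemma orthonormal_complete E : orthonormal_frame E ->
  forall c d, \sum_(p < 3) E p c * E p d = (c == d)%:R.
Proof.
move=> onE c d.
pose M : 'M[R]_3 := \matrix_(p, c) E p c.
have MMT : M *m M^T = 1%:M.
  by apply/matrixP => p q; rewrite !mxE -onE; apply: eq_bigr => i _; rewrite !mxE.
have /matrixP/(_ c d) := mulmx1C MMT; rewrite !mxE => <-.
by apply: eq_bigr => i _; rewrite !mxE.
Qed.

Lemma orthonormal_expand (V : lmodType R) E : orthonormal_frame E ->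
  forall (G : 'I_3 -> V) c, \sum_(p < 3) E p c *: (\sum_(i < 3) E p i *: G i) = G c.
Proof.
move=> onE G c.
under eq_bigr do rewrite scaler_sumr.
rewrite exchange_big /=.
under eq_bigr do (under eq_bigr do rewrite scalerA;
  rewrite -scaler_suml orthonormal_complete //).
rewrite (bigD1 c) //= eqxx scale1r big1 ?addr0 // => i hi.
by rewrite eq_sym (negbTE hi) scale0r.
Qed.

Lemma nondeg_vertices_neq (v : 'I_4 -> vec R) (i j : 'I_4) :
  nondeg_tet v -> (i < j)%N -> exists c, v i c != v j c.
Proof.
move=> hnd hij; apply/existsP; apply: contraLR hnd; rewrite negb_exists negbK.
move=> /forallP vij; have {}vij c : v i c = v j c by apply/eqP; rewrite -[_ == _]negbK.
case: (unliftP ord0 j) => [j' hj|hj]; last by rewrite hj in hij.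
case: (unliftP ord0 i) => [i' hi|hi].
  apply/eqP/(determinant_alternate (i1 := i') (i2 := j')).
    by apply: contraTneq hij => hh; rewrite hi hj hh ltnn.
  by move=> c; rewrite !mxE -hi -hj vij.
apply/eqP; rewrite (expand_det_row _ j') big1 // => c _.
by rewrite mxE -hj -vij hi subrr mul0r.
Qed.

End Geometry.

(* Unisolvence of bubble tests: a polynomial of degree < K, flat of order r
   at both endpoints, is zero on the edge as soon as it is orthogonal to all
   bubbles of order r with cofactor of degree < K - 2r; indeed it is itself
   such a bubble and can be tested against itself. *)
Section BubbleTests.
Variable R : rcfType.
Variables (a b : vec R) (r K : nat).
Hypothesis hL : elen a b != 0.

Lemma restrict_eq0_of_bubble_tests (p : {mpoly R[3]}) :
  flat a r p -> flat b r p -> (msize p <= K)%N ->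
  (forall q : {poly R}, (size q <= K - r.*2)%N ->
     eip a b (restrict a b p) (bubble r q) = 0) ->
  restrict a b p = 0.
Proof.
move=> ha hb sp tests; have [pq sq] := restrict_bubble ha hb.
apply: (eip_sq_eq0 hL); rewrite {2}pq; apply: tests.
exact: leq_trans sq (leq_sub2r _ sp).
Qed.

Lemma restrict_family_eq0_of_bubble_tests (I : finType) (F : I -> {mpoly R[3]}) :
  (forall c, flat a r (F c)) -> (forall c, flat b r (F c)) ->
  (forall c, msize (F c) <= K)%N ->
  (forall Q : I -> {poly R}, (forall c, size (Q c) <= K - r.*2)%N ->
     \sum_(c : I) eip a b (restrict a b (F c)) (bubble r (Q c)) = 0) ->
  forall c, restrict a b (F c) = 0.
Proof.
move=> ha hb sF tests.
pose Q c := bubble_quot r (restrict a b (F c)).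
have sQ c : (size (Q c) <= K - r.*2)%N.
  have [_ sq] := restrict_bubble (ha c) (hb c).
  exact: leq_trans sq (leq_sub2r _ (sF c)).
apply: (sum_eip_sq_eq0 hL); rewrite -[RHS](tests Q sQ); apply: eq_bigr => c _.
by have [<- _] := restrict_bubble (ha c) (hb c).
Qed.

End BubbleTests.

Section Frames.
Variable R : rcfType.

Definition edge_frame (t : vec R) (n : 'I_2 -> vec R) (p : 'I_3) : vec R :=
  match nat_of_ord p with 0 => t | 1 => n ord0 | _ => n ord_max end.

Lemma edge_frameP t n p :
  [\/ edge_frame t n p = t, edge_frame t n p = n ord0 | edge_frame t n p = n ord_max].
Proof. by case: p => [[|[|[|?]]] ?]; [apply: Or31 | apply: Or32 | apply: Or33 |]. Qed.

Lemma edge_frame_orthonormal t n :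
  dot t t = 1 -> (forall l l', dot (n l) (n l') = (l == l')%:R) ->
  (forall l, dot (n l) t = 0) -> orthonormal_frame (edge_frame t n).
Proof.
move=> tt nn nt; have tn l : dot t (n l) = 0 by rewrite dot_sym nt.
by case=> [[|[|[|?]]] hp] [[|[|[|?]]] hq] //=; rewrite /edge_frame /= ?tt ?nn ?nt ?tn.
Qed.

Lemma mderiv_frame E (p : {mpoly R[3]}) d : orthonormal_frame E ->
  p^`M(d) = \sum_(q < 3) E q d *: dderiv (E q) p.
Proof. by move=> onE; rewrite (orthonormal_expand onE (fun i => p^`M(i))). Qed.

Lemma restrict_frame_eq0 a b E (G : 'I_3 -> {mpoly R[3]}) : orthonormal_frame E ->
  (forall p, restrict a b (\sum_(i < 3) E p i *: G i) = 0) ->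
  forall c, restrict a b (G c) = 0.
Proof.
move=> onE G0 c; rewrite -(orthonormal_expand onE G c) restrict_sum big1 // => p _.
by rewrite restrictZ G0 scaler0.
Qed.

Lemma div_curl (F : vfield R) : \sum_(c < 3) (curl F c)^`M(c) = 0.
Proof.
rewrite !big_ord_recl big_ord0 /curl /=.
have -> : lift ord0 (lift ord0 ord0) = i2 :> 'I_3 by apply/val_inj.
have -> : lift ord0 ord0 = i1 :> 'I_3 by apply/val_inj.
have -> : ord0 = i0 by apply/val_inj.
rewrite !mderivB (mderiv_comm i0 i1 (F i2)) (mderiv_comm i0 i2 (F i1)).
rewrite (mderiv_comm i1 i2 (F i0)).
set A := (_ ^`M(_))^`M(_); set B := (_ ^`M(_))^`M(_); set C := (_ ^`M(_))^`M(_).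
by ring.
Qed.

End Frames.

Section Edge.
Variable R : rcfType.
Variables (k : nat) (a b : vec R) (n : 'I_2 -> vec R) (xi : vfield R).
Hypothesis hL : elen a b != 0.
Hypothesis n_on : forall l l', dot (n l) (n l') = (l == l')%:R.
Hypothesis n_t : forall l, dot (n l) (tang a b) = 0.
Hypothesis xi_deg : forall c, (msize (xi c) <= k)%N.
Hypothesis xi_flat_a : forall c, flat a 4 (xi c).
Hypothesis xi_flat_b : forall c, flat b 4 (xi c).

Local Notation t := (tang a b).
Local Notation E := (edge_frame t n).
Local Notation rho := (restrict a b).

Hypothesis moment : eip a b (rho (dotp t xi)) 1 = 0.
Hypothesis test_a : forall q : {poly R}, (size q <= k - 8)%N ->
  eip a b (bubble 4 q) 1 = 0 -> eip a b (rho (dotp t xi)) (bubble 4 q) = 0.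
Hypothesis test_b : forall (jj : 'I_2) (q : {poly R}), (size q <= k - 8)%N ->
  etip a b (rho (dotp (n jj) xi)) (bubble 4 q) = 0.
Hypothesis test_c : forall (jj : 'I_2) (q : {poly R}), (size q <= k - 7)%N ->
  eip a b (rho (dderiv (n jj) (dotp t xi))) (bubble 3 q) = 0.
Hypothesis test_d : forall (jj jj' : 'I_2) (q : {poly R}), (size q <= k - 7)%N ->
  eip a b (rho (dderiv (n jj) (dotp (n jj') xi))) (bubble 3 q) = 0.
Hypothesis test_e : forall Q : 'I_3 -> {poly R}, (forall c, (size (Q c) <= k - 6)%N) ->
  \sum_(c < 3) eip a b (rho (dderiv (n ord0) (curl xi c))) (bubble 2 (Q c)) = 0.
Hypothesis test_f : forall Q : 'I_3 -> {poly R}, (forall c, (size (Q c) <= k - 6)%N) ->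
  let w := fun c => dderiv (n ord_max) (curl xi c) in
  \sum_(c < 3) eip a b (rho (w c - n ord_max c *: dotp (n ord_max) w))
                       (bubble 2 (Q c)) = 0.

Lemma E_orthonormal : orthonormal_frame E.
Proof. exact: edge_frame_orthonormal (tang_unit hL) n_on n_t. Qed.

(* (1.a) with the edge moment: the tangential trace is a bubble of order 4
   with zero mean, so it can be tested against itself. *)
Lemma tangential_trace_eq0 : rho (dotp t xi) = 0.
Proof.
have [pq sq] := restrict_bubble (flat_dotp t xi_flat_a) (flat_dotp t xi_flat_b).
apply: (eip_sq_eq0 hL); rewrite {2}pq; apply: test_a; last by rewrite -pq; exact: moment.
exact: leq_trans sq (leq_sub2r _ (msize_dotp t xi_deg)).
Qed.

(* (1.b): the normal traces are bubbles of order 4 with zero derivative. *)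
Lemma normal_trace_eq0 l : rho (dotp (n l) xi) = 0.
Proof.
have [pq sq] :=
  restrict_bubble (flat_dotp (n l) xi_flat_a) (flat_dotp (n l) xi_flat_b).
apply: (bubble_deriv_eq0 _ pq) => //.
have /eqP : eip a b ((elen a b)^-1 *: (rho (dotp (n l) xi))^`())
                    ((elen a b)^-1 *: (rho (dotp (n l) xi))^`()) = 0.
  rewrite {2}pq; apply: test_b.
  exact: leq_trans sq (leq_sub2r _ (msize_dotp (n l) xi_deg)).
move/eqP/(eip_sq_eq0 hL)/eqP; rewrite scaler_eq0 invr_eq0 (negbTE hL).
by move/eqP.
Qed.

Lemma trace_eq0 c : rho (xi c) = 0.
Proof.
apply: (restrict_frame_eq0 (G := xi) E_orthonormal) => p.
have [->|->|->] := edge_frameP t n p;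
  [exact: tangential_trace_eq0 | exact: normal_trace_eq0..].
Qed.

(* (1.c), (1.d): the normal derivatives of all frame components are bubbles
   of order 3; tangential derivatives vanish since the traces do. *)
Lemma frame_derivative_trace_eq0 p q : rho (dderiv (E p) (dotp (E q) xi)) = 0.
Proof.
have trace_q : rho (dotp (E q) xi) = 0 by apply: restrict_comb_eq0 trace_eq0.
have normal l : rho (dderiv (n l) (dotp (E q) xi)) = 0.
  apply: (restrict_eq0_of_bubble_tests (r := 3) (K := k.-1) hL).
  - exact/flat_dderiv/flat_dotp.
  - exact/flat_dderiv/flat_dotp.
  - exact/msize_dderiv/msize_dotp.
  have -> : (k.-1 - 3.*2 = k - 7)%N by lia.
  by have [->|->|->] := edge_frameP t n q; [exact: test_c | exact: test_d..].
have [->|->|->] := edge_frameP t n p; [|exact: normal..].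
exact: restrict_dderiv_tang_eq0.
Qed.

(* Partial derivatives are combinations of frame derivatives of frame
   components, all of which vanish on the edge. *)
Lemma grad_trace_eq0 c d : rho ((xi c)^`M(d)) = 0.
Proof.
rewrite (mderiv_frame _ _ E_orthonormal); apply: restrict_comb_eq0 => p.
rewrite -(orthonormal_expand E_orthonormal xi c) dderiv_sum restrict_sum big1 // => q _.
by rewrite dderivZ restrictZ frame_derivative_trace_eq0 scaler0.
Qed.

(* The trace of curl xi vanishes, hence so does its tangential derivative. *)
Lemma curl_tangential_derivative_eq0 c : rho (dderiv t (curl xi c)) = 0.
Proof.
apply: restrict_dderiv_tang_eq0 => //.
by rewrite /curl; case: (nat_of_ord c) => [|[|?]]; rewrite restrictB !grad_trace_eq0 subrr.
Qed.

Lemma curl_flat_a l c : flat a 2 (dderiv (n l) (curl xi c)).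
Proof. exact/flat_dderiv/flat_curl. Qed.

Lemma curl_flat_b l c : flat b 2 (dderiv (n l) (curl xi c)).
Proof. exact/flat_dderiv/flat_curl. Qed.

Lemma curl_deg l c : (msize (dderiv (n l) (curl xi c)) <= k.-2)%N.
Proof. exact/msize_dderiv/msize_curl. Qed.

(* (1.e): the first normal derivative of curl xi is a bubble of order 2. *)
Lemma curl_normal0_derivative_eq0 c : rho (dderiv (n ord0) (curl xi c)) = 0.
Proof.
apply: (restrict_family_eq0_of_bubble_tests (r := 2) (K := k.-2) hL
          (F := fun c => dderiv (n ord0) (curl xi c)));
  [exact: curl_flat_a | exact: curl_flat_b | exact: curl_deg |].
have -> : (k.-2 - 2.*2 = k - 6)%N by lia.
exact: test_e.
Qed.

Local Notation w := (fun c => dderiv (n ord_max) (curl xi c)).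

(* div curl xi = 0 controls the normal component of the second normal
   derivative, the other derivatives being already known to vanish. *)
Lemma curl_normal1_component_eq0 : rho (dotp (n ord_max) w) = 0.
Proof.
have <- : rho (\sum_(c < 3) (curl xi c)^`M(c)) = rho (dotp (n ord_max) w).
  rewrite !restrict_sum; apply: eq_bigr => c _.
  rewrite (mderiv_frame _ _ E_orthonormal) restrict_sum !big_ord_recl big_ord0 /=.
  rewrite !restrictZ /edge_frame /= curl_tangential_derivative_eq0.
  by rewrite curl_normal0_derivative_eq0 !scaler0 !add0r addr0.
by rewrite div_curl restrict0.
Qed.

(* (1.f): the tangential part of the second normal derivative of curl xi is
   a bubble of order 2; together with its normal component it vanishes. *)
Lemma curl_normal1_derivative_eq0 c : rho (w c) = 0.
Proof.
have tangential_part : forall c,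
    rho (w c - n ord_max c *: dotp (n ord_max) w) = 0.
  apply: (restrict_family_eq0_of_bubble_tests (r := 2) (K := k.-2) hL
            (F := fun c => w c - n ord_max c *: dotp (n ord_max) w)).
  - by move=> c'; apply/flatB/flatZ/flat_dotp => [|c'']; exact: curl_flat_a.
  - by move=> c'; apply/flatB/flatZ/flat_dotp => [|c'']; exact: curl_flat_b.
  - move=> c'; rewrite (leq_trans (msizeD_le _ _)) // geq_max curl_deg msizeN.
    exact/(leq_trans (msizeZ_le _ _))/msize_dotp/curl_deg.
  have -> : (k.-2 - 2.*2 = k - 6)%N by lia.
  exact: test_f.
have := tangential_part c.
by rewrite restrictB restrictZ curl_normal1_component_eq0 scaler0 subr0.
Qed.

Lemma grad_curl_trace_eq0 c d : rho ((curl xi c)^`M(d)) = 0.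
Proof.
rewrite (mderiv_frame _ _ E_orthonormal); apply: restrict_comb_eq0 => p.
have [->|->|->] := edge_frameP t n p.
- exact: curl_tangential_derivative_eq0.
- exact: curl_normal0_derivative_eq0.
- exact: curl_normal1_derivative_eq0.
Qed.

End Edge.

Unset Implicit Arguments.

Theorem lemmaB1 (R : rcfType) (k : nat) (v : 'I_4 -> vec R)
    (N : 'I_4 -> 'I_4 -> 'I_2 -> vec R) (xi : vfield R) :
  (9 <= k)%N ->
  nondeg_tet v ->
  (* xi in [P_{k-1}(K)]^3 *)
  (forall c, (msize (xi c) <= k)%N) ->
  (* N i j 0, N i j 1 : orthonormal unit normals of the edge [v i, v j] *)
  (forall i j : 'I_4, (i < j)%N ->
     (forall l l' : 'I_2, dot (N i j l) (N i j l') = (l == l')%:R) /\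
     (forall l : 'I_2, dot (N i j l) (tang (v i) (v j)) = 0)) ->
  (* vertex functionals: D^alpha xi (x) = 0, |alpha| <= 3 *)
  (forall (l : 'I_4) (m : 'X_{1..3}) (c : 'I_3), (mdeg m <= 3)%N ->
     ((xi c)^`M[m]).@[v l] = 0) ->
  (* edge functionals, on each edge e = [v i, v j] *)
  (forall i j : 'I_4, (i < j)%N ->
     let a := v i in let b := v j in
     let t := tang a b in
     let n := N i j in
     (* edge moment (xi.t, 1)_e *)
     eip a b (restrict a b (dotp t xi)) 1 = 0 /\
     (* (1.a) *)
     (forall q : {poly R}, (size q <= k - 8)%N ->
        eip a b (bubble 4 q) 1 = 0 ->
        eip a b (restrict a b (dotp t xi)) (bubble 4 q) = 0) /\
     (* (1.b) *)
     (forall (jj : 'I_2) (q : {poly R}), (size q <= k - 8)%N ->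
        etip a b (restrict a b (dotp (n jj) xi)) (bubble 4 q) = 0) /\
     (* (1.c) *)
     (forall (jj : 'I_2) (q : {poly R}), (size q <= k - 7)%N ->
        eip a b (restrict a b (dderiv (n jj) (dotp t xi))) (bubble 3 q) = 0) /\
     (* (1.d) *)
     (forall (jj jj' : 'I_2) (q : {poly R}), (size q <= k - 7)%N ->
        eip a b (restrict a b (dderiv (n jj) (dotp (n jj') xi))) (bubble 3 q)
          = 0) /\
     (* (1.e) *)
     (forall Q : 'I_3 -> {poly R}, (forall c, (size (Q c) <= k - 6)%N) ->
        \sum_(c < 3) eip a b (restrict a b (dderiv (n ord0) (curl xi c)))
                             (bubble 2 (Q c)) = 0) /\
     (* (1.f) *)
     (forall Q : 'I_3 -> {poly R}, (forall c, (size (Q c) <= k - 6)%N) ->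
        let w := fun c => dderiv (n ord_max) (curl xi c) in
        \sum_(c < 3) eip a b
            (restrict a b (w c - n ord_max c *: dotp (n ord_max) w))
            (bubble 2 (Q c)) = 0)) ->
  (* conclusion: xi, grad xi, grad curl xi vanish on every edge *)
  forall i j : 'I_4, (i < j)%N ->
  forall s : R, 0 <= s <= 1 ->
  let x : vec R := fun c => v i c + s * (v j c - v i c) in
  (forall c, (xi c).@[x] = 0) /\
  (forall c d, ((xi c)^`M(d)).@[x] = 0) /\
  (forall c d, ((curl xi c)^`M(d)).@[x] = 0).
Proof.
move=> _ nondeg xi_deg normals vertex edge i j ij s _ x.
have [n_on n_t] := normals i j ij.
have hL : elen (v i) (v j) != 0 by apply/elen_neq0/nondeg_vertices_neq.
have flat_i c : flat (v i) 4 (xi c) by move=> m hm; apply: vertex.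
have flat_j c : flat (v j) 4 (xi c) by move=> m hm; apply: vertex.
case: (edge i j ij) => moment [ta [tb [tc [td [te tf]]]]].
have at_x p : p.@[x] = (restrict (v i) (v j) p).[s] by rewrite horner_restrict.
split; [|split] => [c|c d|c d]; rewrite at_x.
- by rewrite (trace_eq0 (k := k) (n := N i j)) ?horner0.
- by rewrite (grad_trace_eq0 (k := k) (n := N i j)) ?horner0.
- by rewrite (grad_curl_trace_eq0 (k := k) (n := N i j)) ?horner0.
Qed.
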